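(* For all formulas $\alpha,\beta,\delta$: (1) $\alpha\land\beta\vDash\alpha$ and $\alpha\land\beta\vDash\beta$; (2) if $\alpha\vDash\beta$ then $\alpha\land\delta\vDash\beta$; (3) $\lnot\lnot\alpha\equiv\alpha$; (4) if $\alpha\vDash\beta$ then $\lnot\beta\vDash\lnot\alpha$; (5) $\mathbf f\vDash\beta$ and $\beta\vDash\mathbf t$.
   Context: Hilbert spaces and states: for $n\ge1$, $\mathcal H^{(n)}=(\mathbb C^2)^{\otimes n}$ with canonical basis $|x_1,\dots,x_n\rangle$ ($x_i\in\{0,1\}$, $|0\rangle=(1,0)$, $|1\rangle=(0,1)$); $\mathfrak D(\mathcal H^{(n)})$ is the set of density operators (qumixes). A truth-perspective is a unitary $\mathfrak T$ on $\mathbb C^2$, $\mathfrak T^{(n)}=\mathfrak T^{\otimes n}$. $^{\mathfrak T}P_1^{(n)}$ (resp. $^{\mathfrak T}P_0^{(n)}$) is the projection onto the span of the $\mathfrak T^{(n)}|x_1,\dots,x_n\rangle$ with $x_n=1$ (resp. $0$). $\mathtt p_{\mathfrak T}(\rho)=\mathrm{tr}(^{\mathfrak T}P_1^{(n)}\rho)$, and $\rho\preceq_{\mathfrak T}\sigma$ iff $\mathtt p_{\mathfrak T}(\rho)\le\mathtt p_{\mathfrak T}(\sigma)$. $Red^{(j_1,\dots,j_s)}_{[n_1,\dots,n_t]}(\rho)$ is the reduced state of $\rho$ on factors $j_1,\dots,j_s$ of $\mathcal H^{(n_1)}\otimes\cdots\otimes\mathcal H^{(n_t)}$. Gates (canonical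 basis, extended linearly): $\mathtt{NOT}^{(n)}|x_1..x_n\rangle=|x_1..x_{n-1}\rangle\otimes|1-x_n\rangle$; $\sqrt{\mathtt I}^{(n)}|x_1..x_n\rangle=|x_1..x_{n-1}\rangle\otimes\frac1{\sqrt2}((-1)^{x_n}|x_n\rangle+|1-x_n\rangle)$; $\sqrt{\mathtt{NOT}}^{(n)}|x_1..x_n\rangle=|x_1..x_{n-1}\rangle\otimes(\frac{1-i}2|x_n\rangle+\frac{1+i}2|1-x_n\rangle)$; $\mathtt{XOR}^{(m,n)}|x_1..x_m,y_1..y_n\rangle=|x_1..x_m,y_1..y_{n-1}\rangle\otimes|x_m\oplus y_n\rangle$; $\mathtt T^{(m,n,p)}|x_1..x_m,y_1..y_n,z_1..z_p\rangle=|x_1..x_m,y_1..y_n,z_1..z_{p-1}\rangle\otimes|x_my_n\oplus z_p\rangle$ ($\oplus$ addition mod 2). For a gate $G$ on $\mathcal H^{(n)}$: $G_{\mathfrak T}=\mathfrak T^{(n)}G\mathfrak T^{(n)\dagger}$, $^{\mathfrak D}G_{\mathfrak T}(\rho)=G_{\mathfrak T}\rho G_{\mathfrak T}^\dagger$. Language: formulas built from atomic formulas (including distinguished atoms $\mathbf t,\mathbf f$) with unary $\lnot,\sqrt{id},\sqrt\lnot$, binary $\uplus$, ternary $\intercal$; $\alpha\land\beta:=\intercal(\alpha,\beta,\mathbf f)$, $\alpha\lor\beta:=\lnot(\lnot\alpha\land\lnot\beta)$. $At(\alpha)$ = number of occurrences of atomic formulas in $\alpha$. Syntactical tree: $Level_1^\alpha=(\alpha)$;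 $Level_{i+1}^\alpha$ is obtained from $Level_i^\alpha=(\beta_1,\dots,\beta_r)$ by replacing each non-atomic $\beta_j$ by its immediate subformulas (arguments, in order) and keeping atomic $\beta_j$; the last level $Level_h^\alpha$ lists all atomic occurrences. $\mathcal H^{(At\alpha)}=\bigotimes_j\mathcal H^{(At\beta_j)}$. The $\mathfrak T$-gate $G^\alpha_{\mathfrak T(i)}$ ($1\le i<h$) is the tensor product over $j$ of: identity of $\mathbb C^2$ if $\beta_j$ atomic; $\mathtt{NOT}_{\mathfrak T}^{(At\beta)}$, $\sqrt{\mathtt I}_{\mathfrak T}^{(At\beta)}$, $\sqrt{\mathtt{NOT}}_{\mathfrak T}^{(At\beta)}$ for $\lnot\beta,\sqrt{id}\beta,\sqrt\lnot\beta$; $\mathtt{XOR}_{\mathfrak T}^{(At\beta',At\beta'')}$ for $\beta'\uplus\beta''$; $\mathtt T_{\mathfrak T}^{(At\beta',At\beta'',At\beta''')}$ for $\intercal(\beta',\beta'',\beta''')$. Holistic model: a map $\mathtt{Hol}_{\mathfrak T}$ assigning to each level $Level_i^\alpha$ of each formula $\alpha$ a qumix in $\mathfrak D(\mathcal H^{(At\alpha)})$ such that (a) $\mathtt{Hol}_{\mathfrak T}(Level_i^\alpha)={}^{\mathfrak D}G^\alpha_{\mathfrak T(i)}(\mathtt{Hol}_{\mathfrak T}(Level_{i+1}^\alpha))$ for $1\le i<h$; (b) (normality) for each $\gamma$, with the contextual meaning of the occurrence $\beta_j$ in $Level_i^\gamma=(\beta_1,\dots,\beta_r)$ defined as $Red^{(j)}_{[At\beta_1,\dots,At\beta_r]}(\mathtt{Hol}_{\mathfrak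 T}(Level_i^\gamma))$, all occurrences of the same subformula $\beta$ in the tree of $\gamma$ have the same contextual meaning, denoted $\mathtt{Hol}^\gamma_{\mathfrak T}(\beta)$; (c) every occurrence of $\mathbf f$ (resp. $\mathbf t$) has contextual meaning $^{\mathfrak T}P_0^{(1)}$ (resp. $^{\mathfrak T}P_1^{(1)}$). Logical consequence: $\alpha\vDash\beta$ iff for every truth-perspective $\mathfrak T$, every formula $\gamma$ having both $\alpha$ and $\beta$ as subformulas (a formula counts as a subformula of itself), and every holistic model $\mathtt{Hol}_{\mathfrak T}$, $\mathtt{Hol}^\gamma_{\mathfrak T}(\alpha)\preceq_{\mathfrak T}\mathtt{Hol}^\gamma_{\mathfrak T}(\beta)$. $\alpha\equiv\beta$ means $\alpha\vDash\beta$ and $\beta\vDash\alpha$. *)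

From mathcomp Require Import all_boot all_order all_algebra.
From mathcomp Require Import complex.
From mathcomp Require Import reals Rstruct.

Set Implicit Arguments.
Unset Strict Implicit.
Unset Printing Implicit Defensive.
Import Order.TTheory GRing.Theory Num.Theory.
Local Open Scope ring_scope.

Definition C : numClosedFieldType := (Rdefinitions.R)[i].

(** Basis vectors |x_1,...,x_n> are bit strings [x : seq bool] of size n
    (true = 1); an operator is given by its matrix entries
    [A u x = <u|A|x>]. Only entries indexed by strings of size n matter. *)
Definition op := seq bool -> seq bool -> C.

Fixpoint allbits (n : nat) : seq (seq bool) :=
  if n is n'.+1 then
    [seq b :: s | b <- [:: false; true], s <- allbits n']
  else [:: [::]].

Definition opeq (n : nat) (A B : op) : Prop :=
  forall u x, size u = n -> size x = n -> A u x = B u x.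

Definition idop : op := fun u x => (u == x)%:R.

Definition opmul (n : nat) (A B : op) : op :=
  fun u x => \sum_(z <- allbits n) A u z * B z x.

Definition adj (A : op) : op := fun u x => (A x u)^*.

Definition trace (n : nat) (A : op) : C := \sum_(x <- allbits n) A x x.

Definition density (n : nat) (rho : op) : Prop :=
  (forall v : seq bool -> C,
      0 <= \sum_(u <- allbits n) \sum_(x <- allbits n) (v u)^* * rho u x * v x)
  /\ trace n rho = 1.

Definition unitary2 (T : op) : Prop :=
  opeq 1 (opmul 1 T (adj T)) idop /\ opeq 1 (opmul 1 (adj T) T) idop.

Definition tpow (T : op) : op :=
  fun u x => \prod_(p <- zip u x) T [:: p.1] [:: p.2].

(** ^T P_b^(n): projection onto span{ T^(n)|x> : x_n = b } *)
Definition projT (T : op) (n : nat) (b : bool) : op :=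
  fun u w => \sum_(x <- allbits n | last false x == b)
                tpow T u x * (tpow T w x)^*.

Definition probT (T : op) (n : nat) (rho : op) : C :=
  trace n (opmul n (projT T n true) rho).


Definition front (s : seq bool) : seq bool := take (size s).-1 s.

Definition lastgate (M : bool -> bool -> C) : op :=
  fun u x => (front u == front x)%:R * M (last false u) (last false x).

Definition NOTg : op := lastgate (fun a b => (a == ~~ b)%:R).

Definition sqrt2 : C := sqrtC 2.

Definition sqrtIg : op :=
  lastgate (fun a b => if a == b then (if b then -1 else 1) / sqrt2
                       else 1 / sqrt2).

Definition sqrtNOTg : op :=
  lastgate (fun a b => if a == b then (1 - 'i) / 2%:R else (1 + 'i) / 2%:R).

Definition setlast (s : seq bool) (c : bool) : seq bool := rcons (front s) c.

Definition XORg (m : nat) : op :=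
  fun u x => (u == setlast x (addb (nth false x m.-1) (last false x)))%:R.

Definition TOFg (m n : nat) : op :=
  fun u x => (u == setlast x
                 (addb (nth false x m.-1 && nth false x (m + n).-1)
                       (last false x)))%:R.

Definition conjT (T : op) (n : nat) (G : op) : op :=
  opmul n (opmul n (tpow T) G) (adj (tpow T)).

Definition Dgate (n : nat) (G : op) (rho : op) : op :=
  opmul n (opmul n G rho) (adj G).

Inductive form : Type :=
  | Atom of nat
  | Tt
  | Ff
  | Neg of form
  | Sqid of form
  | Sqneg of form
  | Xor of form & form
  | Tof of form & form & form.

Definition And (a b : form) : form := Tof a b Ff.
Definition Or (a b : form) : form := Neg (And (Neg a) (Neg b)).

Fixpoint At (a : form) : nat :=
  match a with
  | Atom _ | Tt | Ff => 1
  | Neg b | Sqid b | Sqneg b => At b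
  | Xor b c => At b + At c
  | Tof b c d => At b + At c + At d
  end.

Fixpoint height (a : form) : nat :=
  match a with
  | Atom _ | Tt | Ff => 1
  | Neg b | Sqid b | Sqneg b => (height b).+1
  | Xor b c => (maxn (height b) (height c)).+1
  | Tof b c d => (maxn (maxn (height b) (height c)) (height d)).+1
  end.

Definition children (a : form) : seq form :=
  match a with
  | Atom _ | Tt | Ff => [:: a]
  | Neg b | Sqid b | Sqneg b => [:: b]
  | Xor b c => [:: b; c]
  | Tof b c d => [:: b; c; d]
  end.

Definition expand (l : seq form) : seq form := flatten (map children l).

(** [level a k] = Level_{k+1}^a (levels are 0-indexed here: k < height a) *)
Definition level (a : form) (k : nat) : seq form := iter k expand [:: a].

Definition gate_of (b : form) : op :=
  match b with
  | Atom _ | Tt | Ff => idop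
  | Neg c => NOTg
  | Sqid c => sqrtIg
  | Sqneg c => sqrtNOTg
  | Xor c _ => XORg (At c)
  | Tof c d _ => TOFg (At c) (At d)
  end.

Definition gateT_of (T : op) (b : form) : op :=
  match b with
  | Atom _ | Tt | Ff => idop
  | _ => conjT T (At b) (gate_of b)
  end.

Fixpoint tens (l : seq (op * nat)) : op :=
  fun u x =>
    match l with
    | [::] => 1
    | (G, n) :: l' => G (take n u) (take n x) * tens l' (drop n u) (drop n x)
    end.

Definition levelgate (T : op) (a : form) (k : nat) : op :=
  tens [seq (gateT_of T b, At b) | b <- level a k].

Definition Red (ns : seq nat) (j : nat) (rho : op) : op :=
  fun u x =>
    let pre := \sum_(i < j) nth 0%N ns i in
    let post := (\sum_(i <- drop j.+1 ns) i)%N in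
    \sum_(a <- allbits pre) \sum_(c <- allbits post)
       rho (a ++ u ++ c) (a ++ x ++ c).

Definition ctx (Hol : form -> nat -> op) (g : form) (k j : nat) : op :=
  Red [seq At b | b <- level g k] j (Hol g k).

Definition occ (g : form) (k j : nat) (b : form) : Prop :=
  (k < height g)%N /\ (j < size (level g k))%N /\ nth Ff (level g k) j = b.

Definition holistic (T : op) (Hol : form -> nat -> op) : Prop :=
  (forall a k, (k < height a)%N -> density (At a) (Hol a k))
  /\ (forall a k, (k.+1 < height a)%N ->
        opeq (At a) (Hol a k) (Dgate (At a) (levelgate T a k) (Hol a k.+1)))
  /\ (forall g b k1 j1 k2 j2, occ g k1 j1 b -> occ g k2 j2 b ->
        opeq (At b) (ctx Hol g k1 j1) (ctx Hol g k2 j2))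
  /\ (forall g k j, occ g k j Ff -> opeq 1 (ctx Hol g k j) (projT T 1 false))
  /\ (forall g k j, occ g k j Tt -> opeq 1 (ctx Hol g k j) (projT T 1 true)).

(** alpha |= beta : for every truth-perspective T, every gamma containing
    alpha and beta as subformulas, every holistic model Hol,
    Hol^gamma(alpha) <=_T Hol^gamma(beta); Hol^gamma(x) is the (common, by
    normality) contextual meaning of the occurrences of x in gamma's tree *)
Definition consequence (a b : form) : Prop :=
  forall T, unitary2 T ->
  forall g Hol, holistic T Hol ->
  forall k1 j1 k2 j2, occ g k1 j1 a -> occ g k2 j2 b ->
    probT T (At a) (ctx Hol g k1 j1) <= probT T (At b) (ctx Hol g k2 j2).

Definition equiv (a b : form) : Prop := consequence a b /\ consequence b a.

(* Every gate is unitary, so tracing the neighbouring blocks out of the holistic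
   equation between two levels shows that the contextual meaning of a non-atomic
   occurrence is its T-gate applied to the reduced state rho of its block of
   children.  In the basis T^(n)|x> the NOT and Toffoli T-gates just permute basis
   vectors by flipping the last bit, so all probabilities are sums of diagonal
   weights of rho: p_T(~c) = 1 - p_T(c), and p_T(c /\ d) is the weight of
   "(c-bit and d-bit) xor f-bit", where the f-bit has weight 0 by (c); hence
   p_T(c /\ d) <= min(p_T(c), p_T(d)).  Normality makes these probabilities
   independent of the chosen occurrences, and 0 <= p_T <= 1 together with
   p_T(f) = 0 and p_T(t) = 1 gives the remaining claims. *)

From Pilot Require Import Defs.
From mathcomp Require Import all_boot all_order all_algebra.
From mathcomp Require Import complex.
From mathcomp Require Import reals Rstruct.
From Stdlib Require Import Setoid Morphisms.
From mathcomp Require Import ring zify.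

Set Implicit Arguments.
Unset Strict Implicit.
Unset Printing Implicit Defensive.
Import Order.TTheory GRing.Theory Num.Theory.
Local Open Scope ring_scope.

Lemma allbitsS n :
  allbits n.+1 = map (cons false) (allbits n) ++ map (cons true) (allbits n).
Proof. by rewrite /= cats0. Qed.

Lemma mem_allbits n s : (s \in allbits n) = (size s == n).
Proof.
elim: n s => [|n IH] s; first by case: s.
rewrite allbitsS mem_cat; case: s => [|c s].
  by apply/negbTE; rewrite negb_or; apply/andP; split; apply/mapP=> [[]].
have cons_inj (b : bool) : injective (cons b) by move=> ? ? [].
rewrite /= eqSS -IH; case: c.
- have -> : (true :: s \in map (cons false) (allbits n)) = false.
    by apply/negbTE/mapP => [[]].
  by rewrite (mem_map (cons_inj true)).
- have -> : (false :: s \in map (cons true) (allbits n)) = false.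
    by apply/negbTE/mapP => [[]].
  by rewrite (mem_map (cons_inj false)) orbF.
Qed.

Lemma size_allbits n s : s \in allbits n -> size s = n.
Proof. by rewrite mem_allbits => /eqP. Qed.

Lemma allbits_uniq n : uniq (allbits n).
Proof.
have cons_inj (b : bool) : injective (cons b) by move=> ? ? [].
elim: n => [|n IH] //; rewrite allbitsS cat_uniq !map_inj_uniq // IH andbT.
by apply/hasPn => _ /mapP [y _ ->]; apply/mapP => [[]].
Qed.

Lemma big_allbits_cat (F : seq bool -> C) n m :
  \sum_(z <- allbits (n + m)) F z =
  \sum_(z1 <- allbits n) \sum_(z2 <- allbits m) F (z1 ++ z2).
Proof.
elim: n F => [|n IH] F; first by rewrite add0n /= big_seq1.
by rewrite addSn !allbitsS !big_cat !big_map /= !IH.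
Qed.

Lemma big_allbits1 (F : seq bool -> C) :
  \sum_(w <- allbits 1) F w = F [:: false] + F [:: true].
Proof. by rewrite /= !big_cons big_nil addr0. Qed.

Lemma big_allbits_delta (F : seq bool -> C) n w : size w = n ->
  \sum_(z <- allbits n) (z == w)%:R * F z = F w.
Proof.
move=> sw; rewrite (bigD1_seq w) ?mem_allbits ?sw ?allbits_uniq //= eqxx mul1r.
by rewrite big1 ?addr0 // => z /negbTE ->; rewrite mul0r.
Qed.

Lemma big_allbits_deltar (F : seq bool -> C) n w : size w = n ->
  \sum_(z <- allbits n) F z * (z == w)%:R = F w.
Proof.
by move=> sw; rewrite -(big_allbits_delta F sw); apply: eq_bigr => z _; rewrite mulrC.
Qed.

Lemma big_allbits_diag n m (F : seq bool -> seq bool -> seq bool -> C)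
    (Phi : seq bool -> seq bool -> C) :
  (forall y z, size y = n -> size z = n -> \sum_(a <- allbits m) F a y z = (y == z)%:R) ->
  \sum_(a <- allbits m) \sum_(y <- allbits n) \sum_(z <- allbits n) F a y z * Phi y z =
  \sum_(y <- allbits n) Phi y y.
Proof.
move=> HF; rewrite exchange_big /=; apply: eq_big_seq => y /size_allbits sy.
rewrite exchange_big /= -(big_allbits_delta (Phi y) sy).
by apply: eq_big_seq => z /size_allbits sz; rewrite -mulr_suml HF // eq_sym.
Qed.

Lemma exchange_big3 (r1 r2 r3 : seq (seq bool)) (F : seq bool -> seq bool -> seq bool -> C) :
  \sum_(a <- r1) \sum_(b <- r2) \sum_(c <- r3) F a b c =
  \sum_(c <- r3) \sum_(b <- r2) \sum_(a <- r1) F a b c.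
Proof.
rewrite exchange_big /=; under eq_bigr do rewrite exchange_big /=.
by rewrite exchange_big.
Qed.

Lemma natr_and (a b : bool) : ((a && b)%:R : C) = a%:R * b%:R.
Proof. by case: a; case: b; rewrite ?mul1r ?mul0r. Qed.

Lemma opeq_refl n : Reflexive (opeq n). Proof. by move=> A u x. Qed.
Lemma opeq_sym n : Symmetric (opeq n). Proof. by move=> A B h u x su sx; rewrite h. Qed.
Lemma opeq_trans n : Transitive (opeq n).
Proof. by move=> A B D h1 h2 u x su sx; rewrite h1 ?h2. Qed.

Add Parametric Relation n : op (opeq n)
  reflexivity proved by (@opeq_refl n) symmetry proved by (@opeq_sym n)
  transitivity proved by (@opeq_trans n) as opeq_rel.

Add Parametric Morphism n : (opmul n)
  with signature (opeq n ==> opeq n ==> opeq n) as opmul_mor.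
Proof.
by move=> A A' hA B B' hB u x su sx; apply: eq_big_seq => z /size_allbits sz; rewrite hA ?hB.
Qed.

Add Parametric Morphism n : (@adj) with signature (opeq n ==> opeq n) as adj_mor.
Proof. by move=> A A' h u x su sx; rewrite /adj h. Qed.

Add Parametric Morphism n : (Dgate n)
  with signature (opeq n ==> opeq n ==> opeq n) as Dgate_mor.
Proof. by move=> U U' hU r r' hr; rewrite /Dgate hU hr. Qed.

Lemma trace_opeq n r r' : opeq n r r' -> trace n r = trace n r'.
Proof. by move=> h; apply: eq_big_seq => z /size_allbits sz; rewrite h. Qed.

Lemma probT_opeq T n r r' : opeq n r r' -> probT T n r = probT T n r'.
Proof. by move=> h; apply: trace_opeq; rewrite h. Qed.

Lemma opmulA n A B D : opeq n (opmul n (opmul n A B) D) (opmul n A (opmul n B D)).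
Proof.
move=> u x _ _; rewrite /opmul; under eq_bigr do rewrite mulr_suml.
rewrite exchange_big /=; apply: eq_bigr => z _; rewrite mulr_sumr.
by apply: eq_bigr => y _; rewrite mulrA.
Qed.

Lemma adj_opmul n A B : opeq n (adj (opmul n A B)) (opmul n (adj B) (adj A)).
Proof.
move=> u x _ _; rewrite /adj /opmul rmorph_sum; apply: eq_bigr => z _.
by rewrite rmorphM mulrC.
Qed.

Lemma adjK n A : opeq n (adj (adj A)) A.
Proof. by move=> u x _ _; rewrite /adj conjCK. Qed.

Lemma mul1op n A : opeq n (opmul n idop A) A.
Proof.
move=> u x su _; rewrite /opmul /idop -(big_allbits_delta (A^~ x) su).
by apply: eq_bigr => z _; rewrite eq_sym.
Qed.

Lemma mulop1 n A : opeq n (opmul n A idop) A.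
Proof. by move=> u x _ sx; rewrite /opmul /idop big_allbits_deltar. Qed.

Definition isometric n (U : op) := opeq n (opmul n (adj U) U) idop.
Definition coisometric n (U : op) := opeq n (opmul n U (adj U)) idop.

Add Parametric Morphism n : (isometric n) with signature (opeq n ==> iff) as isometric_mor.
Proof. by move=> U V hUV; rewrite /isometric hUV. Qed.

Add Parametric Morphism n : (coisometric n) with signature (opeq n ==> iff) as coisometric_mor.
Proof. by move=> U V hUV; rewrite /coisometric hUV. Qed.

Lemma coisometric_adj n U : coisometric n U <-> isometric n (adj U).
Proof. by rewrite /isometric adjK. Qed.

Lemma isometric_sum n A y z : isometric n A -> size y = n -> size z = n ->
  \sum_(a <- allbits n) A a y * (A a z)^* = (y == z)%:R.
Proof.
move=> h sy sz; have := h z y sz sy; rewrite /opmul /adj /idop eq_sym => <-.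
by apply: eq_bigr => a _; rewrite mulrC.
Qed.

Lemma coisometric_sum n A y z : coisometric n A -> size y = n -> size z = n ->
  \sum_(a <- allbits n) (A y a)^* * A z a = (y == z)%:R.
Proof.
move=> h sy sz; have := h z y sz sy; rewrite /opmul /adj /idop eq_sym => <-.
by apply: eq_bigr => a _; rewrite mulrC.
Qed.

Lemma isometric_idop n : isometric n idop.
Proof.
move=> u x su sx; rewrite /opmul /adj /idop.
by under eq_bigr do rewrite conjC_nat; rewrite big_allbits_delta.
Qed.

Lemma isometric_conj n U G :
  isometric n U -> coisometric n U -> isometric n G ->
  isometric n (opmul n (opmul n U G) (adj U)).
Proof.
move=> hi hc hG; rewrite /isometric adj_opmul adjK adj_opmul !opmulA.
rewrite -(opmulA (adj U) U) (hi : opeq _ _ _) mul1op -(opmulA (adj G) G) (hG : opeq _ _ _) mul1op.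
exact: hc.
Qed.

Definition tensor2 p (A B : op) : op :=
  fun u x => A (take p u) (take p x) * B (drop p u) (drop p x).

Lemma tensor2_cat p A B u1 u2 x1 x2 : size u1 = p -> size x1 = p ->
  tensor2 p A B (u1 ++ u2) (x1 ++ x2) = A u1 x1 * B u2 x2.
Proof.
by move=> <- sx; rewrite /tensor2 !take_size_cat ?drop_size_cat // -sx drop_size_cat.
Qed.

Lemma size_take_add p q (y : seq bool) : size y = (p + q)%N -> size (take p y) = p.
Proof. by move=> sy; rewrite size_takel // sy leq_addr. Qed.

Lemma size_drop_add p q (y : seq bool) : size y = (p + q)%N -> size (drop p y) = q.
Proof. by move=> sy; rewrite size_drop sy addKn. Qed.

Add Parametric Morphism p q : (tensor2 p)
  with signature (opeq p ==> opeq q ==> opeq (p + q)) as tensor2_mor.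
Proof.
move=> A A' hA B B' hB u x su sx.
by rewrite /tensor2 hA ?hB ?(size_take_add su) ?(size_take_add sx)
  ?(size_drop_add su) ?(size_drop_add sx).
Qed.

Lemma adj_tensor2 n p A B : opeq n (adj (tensor2 p A B)) (tensor2 p (adj A) (adj B)).
Proof. by move=> u x _ _; rewrite /adj /tensor2 rmorphM. Qed.

Lemma isometric_tensor2 p q A B :
  isometric p A -> isometric q B -> isometric (p + q) (tensor2 p A B).
Proof.
move=> hA hB y z sy sz; rewrite /opmul /adj big_allbits_cat.
transitivity (\sum_(w1 <- allbits p) \sum_(w2 <- allbits q)
   ((A w1 (take p y))^* * A w1 (take p z)) * ((B w2 (drop p y))^* * B w2 (drop p z))).
  apply: eq_big_seq => w1 /size_allbits s1; apply: eq_big_seq => w2 _.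
  by rewrite /tensor2 !take_size_cat // !drop_size_cat // rmorphM; ring.
rewrite -big_distrlr /=.
have := hA _ _ (size_take_add sy) (size_take_add sz); rewrite /opmul /adj => ->.
have := hB _ _ (size_drop_add sy) (size_drop_add sz); rewrite /opmul /adj => ->.
rewrite /idop -natr_and -[in RHS](cat_take_drop p y) -[in RHS](cat_take_drop p z).
by rewrite eqseq_cat // (size_take_add sy) (size_take_add sz).
Qed.

Lemma coisometric_tensor2 p q A B :
  coisometric p A -> coisometric q B -> coisometric (p + q) (tensor2 p A B).
Proof.
rewrite !coisometric_adj adj_tensor2; exact: isometric_tensor2.
Qed.

Lemma tensor2_tpow T n : opeq n.+1 (tpow T) (tensor2 1 T (tpow T)).
Proof.
move=> [|u0 u] [|x0 x] // _ _.
by rewrite /tpow /tensor2 /= !take0 !drop0 big_cons.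
Qed.

Lemma isometric0 U : U [::] [::] = 1 -> isometric 0 U.
Proof. by move=> h [|//] [|//] _ _; rewrite /opmul /adj /= big_seq1 h rmorph1 mulr1. Qed.

Lemma coisometric0 U : U [::] [::] = 1 -> coisometric 0 U.
Proof. by move=> h [|//] [|//] _ _; rewrite /opmul /adj /= big_seq1 h rmorph1 mulr1. Qed.

Lemma isometric_tpow T n : unitary2 T -> isometric n (tpow T).
Proof.
case=> _ hT; elim: n => [|n IH]; first by apply: isometric0; rewrite /tpow big_nil.
by rewrite tensor2_tpow; apply: (isometric_tensor2 (p := 1)).
Qed.

Lemma coisometric_tpow T n : unitary2 T -> coisometric n (tpow T).
Proof.
case=> hT _; elim: n => [|n IH]; first by apply: coisometric0; rewrite /tpow big_nil.
by rewrite tensor2_tpow; apply: (coisometric_tensor2 (p := 1)).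
Qed.

Lemma tens_cat (L1 L2 : seq (op * nat)) :
  opeq (sumn (map snd L1) + sumn (map snd L2)) (tens (L1 ++ L2))
       (tensor2 (sumn (map snd L1)) (tens L1) (tens L2)).
Proof.
elim: L1 => [|[G n] L1 IH] u x su sx; first by rewrite /tensor2 /= !drop0 mul1r.
rewrite /= -addnA in su sx *.
rewrite /tensor2 /= !take_takel ?leq_addr // IH ?(size_drop_add su) ?(size_drop_add sx) //.
by rewrite /tensor2 !take_drop !drop_drop !(addnC n) mulrA.
Qed.

Lemma isometric_tens (L : seq (op * nat)) :
  (forall G n, List.In (G, n) L -> isometric n G) ->
  isometric (sumn (map snd L)) (tens L).
Proof.
elim: L => [|[G n] L IH] hL; first exact: isometric0.
apply: isometric_tensor2; first by apply: hL; left.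
by apply: IH => G' n' h; apply: hL; right.
Qed.

Lemma front_rcons (s : seq bool) c : front (rcons s c) = s.
Proof. by rewrite /front size_rcons /= -cats1 take_size_cat. Qed.

Lemma rcons_front_last (s : seq bool) : (0 < size s)%N -> rcons (front s) (last false s) = s.
Proof. by case/lastP: s => // s c _; rewrite front_rcons last_rcons. Qed.

Lemma size_front (s : seq bool) : size (front s) = (size s).-1.
Proof. by case/lastP: s => // s c; rewrite front_rcons size_rcons. Qed.

Lemma nth_front (s : seq bool) i : (i < (size s).-1)%N -> nth false (front s) i = nth false s i.
Proof. by move=> hi; rewrite /front nth_take. Qed.

Lemma size_setlast (s : seq bool) c : (0 < size s)%N -> size (setlast s c) = size s.
Proof. by move=> h; rewrite /setlast size_rcons size_front prednK. Qed.

Section FlipGate.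

(** [h s] is the reversible map applied to the last bit when the other bits are [s]. *)
Variable h : seq bool -> bool -> bool.
Hypothesis h_inv : forall s, involutive (h s).

Definition flipbits (x : seq bool) := setlast x (h (front x) (last false x)).

Definition flipgate : op := fun u x => (u == flipbits x)%:R.

Lemma size_flipbits x : (0 < size x)%N -> size (flipbits x) = size x.
Proof. exact: size_setlast. Qed.

Lemma flipbitsK x : (0 < size x)%N -> flipbits (flipbits x) = x.
Proof.
by move=> sx; rewrite /flipbits /setlast front_rcons last_rcons h_inv rcons_front_last.
Qed.

Lemma flipbits_inj n y z : (0 < n)%N -> size y = n -> size z = n ->
  (flipbits y == flipbits z) = (y == z).
Proof.
move=> n0 sy sz; apply/eqP/eqP => [e|->] //.
by rewrite -(flipbitsK (x := y)) ?sy // e flipbitsK // sz.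
Qed.

Lemma eq_flipbits_sym u x : (0 < size u)%N -> (0 < size x)%N ->
  (u == flipbits x) = (x == flipbits u).
Proof. by move=> su sx; apply/eqP/eqP => ->; rewrite flipbitsK. Qed.

Lemma isometric_flipgate n : (0 < n)%N -> isometric n flipgate.
Proof.
move=> n0 y z sy sz; rewrite /opmul /adj /flipgate /idop.
under eq_bigr do rewrite conjC_nat.
rewrite (big_allbits_delta (fun a => (a == flipbits z)%:R) (w := flipbits y)).
  by rewrite (flipbits_inj n0 sy sz).
by rewrite size_flipbits sy.
Qed.

Lemma flipgate_sandwich n (M : op) x : (0 < n)%N -> size x = n ->
  opmul n (opmul n flipgate M) (adj flipgate) x x = M (flipbits x) (flipbits x).
Proof.
move=> n0 sx; have sfx : size (flipbits x) = n by rewrite size_flipbits sx.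
have pos y : size y = n -> (0 < size y)%N by move->.
rewrite /opmul /adj /flipgate.
transitivity (\sum_(z <- allbits n) M (flipbits x) z * (z == flipbits x)%:R).
  apply: eq_big_seq => z /size_allbits sz.
  rewrite conjC_nat eq_flipbits_sym ?pos //; congr (_ * _).
  rewrite -(big_allbits_delta (M^~ z) sfx).
  by apply: eq_big_seq => y /size_allbits sy; rewrite eq_flipbits_sym ?pos.
by rewrite big_allbits_deltar.
Qed.

Lemma big_allbits_flipbits n (F : seq bool -> C) : (0 < n)%N ->
  \sum_(x <- allbits n) F (flipbits x) = \sum_(x <- allbits n) F x.
Proof.
move=> n0; rewrite -(big_map flipbits xpredT F); apply: perm_big.
apply: uniq_perm; [|exact: allbits_uniq|].
  rewrite map_inj_in_uniq ?allbits_uniq // => y z /size_allbits sy /size_allbits sz e.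
  by apply/eqP; rewrite -(flipbits_inj n0 sy sz) e.
move=> x; rewrite mem_allbits; apply/mapP/eqP => [[y /size_allbits sy ->]|sx].
  by rewrite size_flipbits sy.
by exists (flipbits x); rewrite ?flipbitsK ?mem_allbits ?size_flipbits ?sx.
Qed.

End FlipGate.

Lemma NOTg_flipgate n : (0 < n)%N -> opeq n NOTg (flipgate (fun _ => negb)).
Proof.
move=> n0 u x su sx; rewrite /NOTg /lastgate /flipgate /flipbits /setlast -natr_and.
by rewrite -[in RHS](rcons_front_last (s := u)) ?su // eqseq_rcons.
Qed.

Lemma XORg_flipgate m n : (m.-1 < n.-1)%N ->
  opeq n (XORg m) (flipgate (fun s => addb (nth false s m.-1))).
Proof. by move=> mn u x su sx; rewrite /XORg /flipgate /flipbits nth_front ?sx. Qed.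

Lemma TOFg_flipgate m1 m2 n : (m1.-1 < n.-1)%N -> ((m1 + m2).-1 < n.-1)%N ->
  opeq n (TOFg m1 m2)
    (flipgate (fun s => addb (nth false s m1.-1 && nth false s (m1 + m2).-1))).
Proof. by move=> h1 h2 u x su sx; rewrite /TOFg /flipgate /flipbits !nth_front ?sx. Qed.

Lemma isometric_lastgate (M : bool -> bool -> C) n : (0 < n)%N ->
  (forall b b', (M false b)^* * M false b' + (M true b)^* * M true b' = (b == b')%:R) ->
  isometric n (lastgate M).
Proof.
move=> n0 hM y z sy sz; rewrite /opmul /adj /lastgate /idop.
rewrite -(prednK n0) -addn1 big_allbits_cat.
transitivity (\sum_(w <- allbits n.-1) (w == front y)%:R * ((w == front z)%:R *
   ((M false (last false y))^* * M false (last false z) +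
    (M true (last false y))^* * M true (last false z)))).
  apply: eq_bigr => w _; rewrite big_allbits1 !cats1 !front_rcons !last_rcons.
  by rewrite !rmorphM !rmorph_nat; ring.
rewrite big_allbits_delta ?size_front ?sy // hM -natr_and.
by rewrite -{3}(rcons_front_last (s := y)) ?sy // -{3}(rcons_front_last (s := z)) ?sz // eqseq_rcons.
Qed.

Lemma sqrtIg_unit (b b' : bool) :
  let M a b : C := if a == b then (if b then -1 else 1) / sqrt2 else 1 / sqrt2 in
  (M false b)^* * M false b' + (M true b)^* * M true b' = (b == b')%:R.
Proof.
have s2 : sqrt2 * sqrt2 = 2 by rewrite -expr2 sqrtCK.
have cs : sqrt2^* = sqrt2 by apply: geC0_conj; rewrite sqrtC_ge0 ler0n.
have s0 : sqrt2 != 0 by apply: contra_eqN s2 => /eqP->; rewrite mulr0 eq_sym pnatr_eq0.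
case: b; case: b' => /=; rewrite !(rmorphM, fmorphV, rmorphN, rmorph1) /=;
  rewrite ![GRing.RMorphism.sort _ sqrt2]cs; try by field.
all: transitivity (2 / (sqrt2 * sqrt2)); first by field.
all: by rewrite s2 divff ?pnatr_eq0.
Qed.

Lemma sqrtNOTg_unit (b b' : bool) :
  let M a b : C := if a == b then (1 - 'i) / 2%:R else (1 + 'i) / 2%:R in
  (M false b)^* * M false b' + (M true b)^* * M true b' = (b == b')%:R.
Proof.
have i2 : ('i : C) * 'i = -1 by rewrite -expr2 sqrCi.
have n20 : (2 : C) != 0 by rewrite pnatr_eq0.
case: b; case: b' => /=;
  rewrite !(rmorphM, fmorphV, rmorphB, rmorphD, rmorph1, rmorph_nat) /=;
  rewrite ![GRing.RMorphism.sort _ 'i]conjCi; apply/eqP; rewrite -subr_eq0; apply/eqP.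
- by transitivity ((-1/2) * (('i : C) * 'i + 1)); [field | rewrite i2 addNr mulr0].
- by transitivity ((1/2) * (('i : C) * 'i + 1)); [field | rewrite i2 addNr mulr0].
- by transitivity ((1/2) * (('i : C) * 'i + 1)); [field | rewrite i2 addNr mulr0].
- by transitivity ((-1/2) * (('i : C) * 'i + 1)); [field | rewrite i2 addNr mulr0].
Qed.

Lemma At_gt0 b : (0 < At b)%N.
Proof. by elim: b => //= c hc *; rewrite ?addn_gt0 ?hc. Qed.

Lemma isometric_gateT_of T b : unitary2 T -> isometric (At b) (gateT_of T b).
Proof.
move=> hT; have pos := At_gt0.
case: b => [k|||c|c|c|c d|c d e] /=; try exact: isometric_idop;
  apply: isometric_conj; try exact: isometric_tpow; try exact: coisometric_tpow.
- by rewrite NOTg_flipgate //; apply: isometric_flipgate => // s; apply: negbK.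
- exact: isometric_lastgate (pos c) (@sqrtIg_unit).
- exact: isometric_lastgate (pos c) (@sqrtNOTg_unit).
- have := pos c; have := pos d => *.
  rewrite XORg_flipgate; last lia.
  by apply: isometric_flipgate; [move=> s b; rewrite addbA addbb | lia].
- have := pos c; have := pos d; have := pos e => *.
  rewrite TOFg_flipgate; try lia.
  by apply: isometric_flipgate; [move=> s b; rewrite addbA addbb | lia].
Qed.

Definition RedL p (r : op) : op := fun u x => \sum_(a <- allbits p) r (a ++ u) (a ++ x).
Definition RedR q (r : op) : op := fun u x => \sum_(c <- allbits q) r (u ++ c) (x ++ c).
Definition Red2 p q r := RedR q (RedL p r).

Add Parametric Morphism p q n : (Red2 p q)
  with signature (opeq (p + (n + q)) ==> opeq n) as Red2_mor.
Proof.
move=> r r' h u x su sx; apply: eq_big_seq => c /size_allbits sc.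
apply: eq_big_seq => a /size_allbits sa.
by rewrite h // !size_cat ?sa ?su ?sx ?sc.
Qed.

Lemma trace_Red2 p n q r : trace n (Red2 p q r) = trace (p + (n + q)) r.
Proof.
rewrite /trace /Red2 /RedR /RedL [RHS]big_allbits_cat.
under [RHS]eq_bigr do rewrite big_allbits_cat.
by rewrite exchange_big3; under eq_bigr do rewrite exchange_big.
Qed.

Lemma exchange_big4 (r1 r2 r3 r4 : seq (seq bool))
    (F : seq bool -> seq bool -> seq bool -> seq bool -> C) :
  \sum_(z1 <- r1) \sum_(z2 <- r2) \sum_(y1 <- r3) \sum_(y2 <- r4) F y1 y2 z1 z2 =
  \sum_(y1 <- r3) \sum_(z1 <- r1) \sum_(y2 <- r4) \sum_(z2 <- r2) F y1 y2 z1 z2.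
Proof.
under eq_bigr do rewrite exchange_big /=.
rewrite exchange_big /=; apply: eq_bigr => y1 _; apply: eq_bigr => z1 _.
by rewrite exchange_big.
Qed.

Lemma exchange_big4r (r1 r2 r3 r4 : seq (seq bool))
    (F : seq bool -> seq bool -> seq bool -> seq bool -> C) :
  \sum_(z1 <- r1) \sum_(z2 <- r2) \sum_(y1 <- r3) \sum_(y2 <- r4) F y1 y2 z1 z2 =
  \sum_(y2 <- r4) \sum_(z2 <- r2) \sum_(y1 <- r3) \sum_(z1 <- r1) F y1 y2 z1 z2.
Proof.
under eq_bigr do under eq_bigr do rewrite exchange_big /=.
under eq_bigr do rewrite exchange_big /=.
rewrite exchange_big /=; apply: eq_bigr => y2 _.
rewrite exchange_big /=; apply: eq_bigr => z2 _.
by rewrite exchange_big.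
Qed.

Lemma RedL_Dgate p m A V r : isometric p A ->
  opeq m (RedL p (Dgate (p + m) (tensor2 p A V) r)) (Dgate m V (RedL p r)).
Proof.
move=> hA u x su sx; rewrite /RedL /Dgate /opmul /adj.
pose Phi y1 z1 := \sum_(y2 <- allbits m) \sum_(z2 <- allbits m)
  V u y2 * r (y1 ++ y2) (z1 ++ z2) * (V x z2)^*.
transitivity (\sum_(a <- allbits p) \sum_(y1 <- allbits p) \sum_(z1 <- allbits p)
                (A a y1 * (A a z1)^*) * Phi y1 z1).
  apply: eq_big_seq => a /size_allbits sa; rewrite big_allbits_cat.
  transitivity (\sum_(z1 <- allbits p) \sum_(z2 <- allbits m)
      \sum_(y1 <- allbits p) \sum_(y2 <- allbits m)
      (A a y1 * (A a z1)^*) * (V u y2 * r (y1 ++ y2) (z1 ++ z2) * (V x z2)^*)).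
    apply: eq_big_seq => z1 /size_allbits t1; apply: eq_bigr => z2 _.
    rewrite big_allbits_cat mulr_suml; apply: eq_big_seq => y1 /size_allbits s1.
    rewrite mulr_suml; apply: eq_bigr => y2 _.
    by rewrite !tensor2_cat // rmorphM; ring.
  rewrite exchange_big4; apply: eq_bigr => y1 _; apply: eq_bigr => z1 _.
  by rewrite /Phi mulr_sumr; apply: eq_bigr => y2 _; rewrite mulr_sumr.
rewrite big_allbits_diag; last by move=> y z sy sz; apply: isometric_sum.
rewrite /Phi exchange_big3; apply: eq_bigr => z2 _; rewrite mulr_suml.
by apply: eq_bigr => y2 _; rewrite mulr_sumr mulr_suml.
Qed.

Lemma RedR_Dgate q m V B r : isometric q B ->
  opeq m (RedR q (Dgate (m + q) (tensor2 m V B) r)) (Dgate m V (RedR q r)).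
Proof.
move=> hB u x su sx; rewrite /RedR /Dgate /opmul /adj.
pose Phi y2 z2 := \sum_(y1 <- allbits m) \sum_(z1 <- allbits m)
  V u y1 * r (y1 ++ y2) (z1 ++ z2) * (V x z1)^*.
transitivity (\sum_(c <- allbits q) \sum_(y2 <- allbits q) \sum_(z2 <- allbits q)
                (B c y2 * (B c z2)^*) * Phi y2 z2).
  apply: eq_bigr => c _; rewrite big_allbits_cat.
  transitivity (\sum_(z1 <- allbits m) \sum_(z2 <- allbits q)
      \sum_(y1 <- allbits m) \sum_(y2 <- allbits q)
      (B c y2 * (B c z2)^*) * (V u y1 * r (y1 ++ y2) (z1 ++ z2) * (V x z1)^*)).
    apply: eq_big_seq => z1 /size_allbits t1; apply: eq_bigr => z2 _.
    rewrite big_allbits_cat mulr_suml; apply: eq_big_seq => y1 /size_allbits s1.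
    rewrite mulr_suml; apply: eq_bigr => y2 _.
    by rewrite !tensor2_cat ?su ?sx // rmorphM; ring.
  rewrite exchange_big4r; apply: eq_bigr => y2 _; apply: eq_bigr => z2 _.
  by rewrite /Phi mulr_sumr; apply: eq_bigr => y1 _; rewrite mulr_sumr.
rewrite big_allbits_diag; last by move=> y z sy sz; apply: isometric_sum.
rewrite /Phi exchange_big3; apply: eq_bigr => z1 _; rewrite mulr_suml.
by apply: eq_bigr => y1 _; rewrite mulr_sumr mulr_suml.
Qed.

Lemma Red2_Dgate p n q A G B r : isometric p A -> isometric q B ->
  opeq n (Red2 p q (Dgate (p + (n + q)) (tensor2 p A (tensor2 n G B)) r))
         (Dgate n G (Red2 p q r)).
Proof.
move=> hA hB; rewrite /Red2 -RedR_Dgate //; last exact: hB.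
move=> u x su sx; apply: eq_big_seq => c /size_allbits sc.
by apply: (RedL_Dgate _ _ hA); rewrite size_cat ?su ?sx sc.
Qed.

Definition diagT T n (r : op) x :=
  \sum_(u <- allbits n) \sum_(w <- allbits n) (tpow T u x)^* * r u w * tpow T w x.

Lemma diagT_ge0 T n r x : density n r -> 0 <= diagT T n r x.
Proof. by case=> h _; exact: (h (fun u => tpow T u x)). Qed.

Lemma diagTE T n r x : diagT T n r x = opmul n (opmul n (adj (tpow T)) r) (tpow T) x x.
Proof.
rewrite /diagT /opmul /adj exchange_big /=; apply: eq_bigr => w _.
by rewrite mulr_suml.
Qed.

Lemma tpow_cat T u1 u2 x1 x2 : size u1 = size x1 ->
  tpow T (u1 ++ u2) (x1 ++ x2) = tpow T u1 x1 * tpow T u2 x2.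
Proof. by move=> s; rewrite /tpow zip_cat // big_cat. Qed.

Lemma diagT_RedL T p n r y : coisometric p (tpow T) -> size y = n ->
  diagT T n (RedL p r) y = \sum_(a <- allbits p) diagT T (p + n) r (a ++ y).
Proof.
move=> hc sy; rewrite /diagT.
pose Phi a1 a2 := \sum_(u <- allbits n) \sum_(w <- allbits n)
   (tpow T u y)^* * r (a1 ++ u) (a2 ++ w) * tpow T w y.
transitivity (\sum_(a <- allbits p) \sum_(a1 <- allbits p) \sum_(a2 <- allbits p)
   ((tpow T a1 a)^* * tpow T a2 a) * Phi a1 a2); last first.
  apply: eq_big_seq => a /size_allbits sa; rewrite big_allbits_cat.
  apply: eq_big_seq => a1 /size_allbits s1.
  transitivity (\sum_(a2 <- allbits p) \sum_(u <- allbits n) \sum_(w <- allbits n)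
     (tpow T (a1 ++ u) (a ++ y))^* * r (a1 ++ u) (a2 ++ w) * tpow T (a2 ++ w) (a ++ y)).
    apply: eq_big_seq => a2 /size_allbits s2; rewrite /Phi mulr_sumr.
    apply: eq_bigr => u _; rewrite mulr_sumr; apply: eq_bigr => w _.
    by rewrite !tpow_cat ?s1 ?s2 ?sa // rmorphM; ring.
  by rewrite exchange_big /=; apply: eq_bigr => u _; rewrite big_allbits_cat.
rewrite (big_allbits_diag (F := fun a y z => (tpow T y a)^* * tpow T z a)); last first.
  by move=> y1 z1 s1 t1; apply: coisometric_sum.
rewrite /Phi exchange_big3 [RHS]exchange_big /=; apply: eq_bigr => u _.
by apply: eq_bigr => w _; rewrite /RedL mulr_sumr mulr_suml.
Qed.

Lemma diagT_RedR T q n r y : coisometric q (tpow T) -> size y = n ->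
  diagT T n (RedR q r) y = \sum_(c <- allbits q) diagT T (n + q) r (y ++ c).
Proof.
move=> hc sy; rewrite /diagT.
pose Phi c1 c2 := \sum_(w <- allbits n) \sum_(u <- allbits n)
   (tpow T u y)^* * r (u ++ c1) (w ++ c2) * tpow T w y.
transitivity (\sum_(c <- allbits q) \sum_(c2 <- allbits q) \sum_(c1 <- allbits q)
   ((tpow T c1 c)^* * tpow T c2 c) * Phi c1 c2); last first.
  apply: eq_big_seq => c /size_allbits sc; rewrite big_allbits_cat.
  transitivity (\sum_(u <- allbits n) \sum_(c1 <- allbits q)
     \sum_(w <- allbits n) \sum_(c2 <- allbits q)
     (tpow T (u ++ c1) (y ++ c))^* * r (u ++ c1) (w ++ c2) * tpow T (w ++ c2) (y ++ c));
    last by apply: eq_bigr => u _; apply: eq_bigr => c1 _; rewrite big_allbits_cat.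
  rewrite exchange_big4r; apply: eq_bigr => c2 _; apply: eq_bigr => c1 _.
  rewrite /Phi mulr_sumr; apply: eq_big_seq => w /size_allbits sw.
  rewrite mulr_sumr; apply: eq_big_seq => u /size_allbits su.
  by rewrite !tpow_cat ?su ?sw ?sy // rmorphM; ring.
rewrite (big_allbits_diag (F := fun a y z => (tpow T z a)^* * tpow T y a) (fun c2 c1 => Phi c1 c2));
  last by move=> y1 z1 s1 t1; rewrite eq_sym; apply: coisometric_sum.
rewrite /Phi exchange_big3; apply: eq_bigr => u _; apply: eq_bigr => w _.
by rewrite /RedR mulr_sumr mulr_suml.
Qed.

Lemma diagT_Red2 T p n q r y : unitary2 T -> size y = n ->
  diagT T n (Red2 p q r) y =
  \sum_(a <- allbits p) \sum_(c <- allbits q) diagT T (p + (n + q)) r (a ++ y ++ c).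
Proof.
move=> hT sy; rewrite /Red2 diagT_RedR ?sy //; last exact: coisometric_tpow.
rewrite [in RHS]exchange_big /=; apply: eq_big_seq => c /size_allbits sc.
by rewrite diagT_RedL ?size_cat ?sy ?sc //; apply: coisometric_tpow.
Qed.

Lemma diagT_Red2_ge0 T p n q r y : unitary2 T -> density (p + (n + q)) r -> size y = n ->
  0 <= diagT T n (Red2 p q r) y.
Proof.
move=> hT hr sy; rewrite diagT_Red2 //.
by apply: sumr_ge0 => a _; apply: sumr_ge0 => c _; apply: diagT_ge0.
Qed.

Lemma big_diagT T n r : unitary2 T -> \sum_(x <- allbits n) diagT T n r x = trace n r.
Proof.
move=> hT; rewrite /diagT /trace.
transitivity (\sum_(x <- allbits n) \sum_(u <- allbits n) \sum_(w <- allbits n)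
  ((tpow T u x)^* * tpow T w x) * r u w).
  by apply: eq_bigr => x _; apply: eq_bigr => u _; apply: eq_bigr => w _; ring.
rewrite big_allbits_diag // => y z sy sz.
by apply: coisometric_sum => //; apply: coisometric_tpow.
Qed.

Lemma probT_diagT T n r :
  probT T n r = \sum_(x <- allbits n) (last false x)%:R * diagT T n r x.
Proof.
rewrite /probT /trace /opmul /projT /diagT.
transitivity (\sum_(u <- allbits n) \sum_(z <- allbits n) \sum_(x <- allbits n)
   (last false x)%:R * ((tpow T z x)^* * r z u * tpow T u x)).
  apply: eq_bigr => u _; apply: eq_bigr => z _; rewrite big_mkcond mulr_suml.
  by apply: eq_bigr => x _; case: (last false x); rewrite /= ?mul1r ?mul0r //; ring.
rewrite exchange_big3; apply: eq_bigr => x _; rewrite mulr_sumr; apply: eq_bigr => z _.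
by rewrite mulr_sumr.
Qed.

Lemma diagT_Dgate_flipgate T n h G r x :
  unitary2 T -> (forall s, involutive (h s)) -> (0 < n)%N ->
  opeq n G (flipgate h) -> size x = n ->
  diagT T n (Dgate n (conjT T n G) r) x = diagT T n r (flipbits h x).
Proof.
move=> hT hh n0 hG sx; rewrite !diagTE.
set M := opmul n (opmul n (adj (tpow T)) r) (tpow T).
have key : opeq n (opmul n (opmul n (adj (tpow T)) (Dgate n (conjT T n G) r)) (tpow T))
                  (opmul n (opmul n (flipgate h) M) (adj (flipgate h))).
  rewrite -hG /M /Dgate /conjT adj_opmul adjK adj_opmul !opmulA.
  by rewrite -(opmulA (adj (tpow T)) (tpow T)) (@isometric_tpow T n hT : opeq _ _ _) mul1op mulop1.
by rewrite key // flipgate_sandwich.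
Qed.

Lemma probT_Dgate_flipgate T n h G r :
  unitary2 T -> (forall s, involutive (h s)) -> (0 < n)%N -> opeq n G (flipgate h) ->
  probT T n (Dgate n (conjT T n G) r) =
  \sum_(x <- allbits n) (h (front x) (last false x))%:R * diagT T n r x.
Proof.
move=> hT hh n0 hG; rewrite probT_diagT.
transitivity (\sum_(x <- allbits n)
    (last false (flipbits h (flipbits h x)))%:R * diagT T n r (flipbits h x)).
  apply: eq_big_seq => x /size_allbits sx.
  by rewrite (diagT_Dgate_flipgate r hT hh n0 hG sx) flipbitsK // sx.
rewrite (big_allbits_flipbits hh (fun y => (last false (flipbits h y))%:R * diagT T n r y)) //.
by apply: eq_bigr => x _; rewrite /flipbits /setlast last_rcons.
Qed.

Lemma diagT_projT T n b x : unitary2 T -> size x = n ->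
  diagT T n (projT T n b) x = (last false x == b)%:R.
Proof.
move=> hT sx; have hi := @isometric_tpow T n hT; rewrite /diagT /projT.
transitivity (\sum_(y <- allbits n) (last false y == b)%:R *
   ((\sum_(u <- allbits n) (tpow T u x)^* * tpow T u y) *
    (\sum_(w <- allbits n) (tpow T w y)^* * tpow T w x))).
  rewrite [RHS](eq_bigr (fun y => \sum_(u <- allbits n) \sum_(w <- allbits n)
      (last false y == b)%:R * ((tpow T u x)^* * tpow T u y * ((tpow T w y)^* * tpow T w x))));
    last by move=> y _; rewrite big_distrlr /= mulr_sumr; apply: eq_bigr => u _; rewrite mulr_sumr.
  rewrite exchange_big3 exchange_big /=; apply: eq_bigr => u _; apply: eq_bigr => w _.
  rewrite big_mkcond mulr_sumr mulr_suml; apply: eq_bigr => y _.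
  by case: (_ == b); rewrite /= ?mul1r ?mul0r ?mulr0 //; ring.
transitivity (\sum_(y <- allbits n) (last false y == b)%:R * (y == x)%:R : C).
  apply: eq_big_seq => y /size_allbits sy.
  have h1 := hi x y sx sy; have h2 := hi y x sy sx; rewrite /opmul /adj /idop in h1 h2.
  by rewrite h1 h2 [(x == y)]eq_sym -natr_and andbb.
by rewrite big_allbits_deltar.
Qed.

Lemma probT_projT T b : unitary2 T -> probT T 1 (projT T 1 b) = b%:R.
Proof.
move=> hT; rewrite probT_diagT big_allbits1 !diagT_projT //.
by case: b; rewrite /= ?mul0r ?mul1r ?add0r ?addr0.
Qed.

Definition sumAt (l : seq Defs.form) := sumn (map At l).

Lemma sumAt_cat l1 l2 : sumAt (l1 ++ l2) = (sumAt l1 + sumAt l2)%N.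
Proof. by rewrite /sumAt map_cat sumn_cat. Qed.

Lemma sumAt_children b : sumAt (children b) = At b.
Proof. by case: b => //= *; rewrite /sumAt /= ?addn0 ?addnA. Qed.

Lemma expand_cat l1 l2 : expand (l1 ++ l2) = expand l1 ++ expand l2.
Proof. by rewrite /expand map_cat flatten_cat. Qed.

Lemma sumAt_expand l : sumAt (expand l) = sumAt l.
Proof.
elim: l => //= b l IH.
by rewrite -cat1s expand_cat sumAt_cat IH /expand /= cats0 sumAt_children.
Qed.

Lemma level_succ g k : level g k.+1 = expand (level g k).
Proof. by rewrite /level iterS. Qed.

Lemma sumAt_level g k : sumAt (level g k) = At g.
Proof.
elim: k => [|k IH]; first by rewrite /sumAt /= addn0.
by rewrite level_succ sumAt_expand.
Qed.

Lemma level_next g k l1 b l2 : level g k = l1 ++ b :: l2 ->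
  level g k.+1 = expand l1 ++ children b ++ expand l2.
Proof. by move=> hl; rewrite level_succ hl expand_cat -cat1s expand_cat /expand /= cats0. Qed.

Lemma At_level g k l1 b l2 : level g k = l1 ++ b :: l2 ->
  At g = (sumAt l1 + (At b + sumAt l2))%N.
Proof. by move=> hl; rewrite -(sumAt_level g k) hl sumAt_cat. Qed.

Lemma occ_level g k j b : occ g k j b ->
  exists l1 l2, level g k = l1 ++ b :: l2 /\ j = size l1.
Proof.
case=> _ [hj hb]; exists (take j (level g k)), (drop j.+1 (level g k)).
by rewrite -{1}(cat_take_drop j (level g k)) (drop_nth Ff hj) hb size_takel // ltnW.
Qed.

Definition atomic (b : Defs.form) := match b with Atom _ | Tt | Ff => true | _ => false end.

Lemma In_expand x l : List.In x (expand l) -> exists2 y, List.In y l & List.In x (children y).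
Proof.
elim: l => [|y l IH] //= h.
case: (List.in_app_or (children y) (expand l) x h) => [hy|/IH [z h1 h2]].
  by exists y => //; left.
by exists z => //; right.
Qed.

Lemma height_child b x : ~~ atomic b -> List.In x (children b) -> (height x < height b)%N.
Proof.
case: b => //= [c|c|c|c d|c d e] _ h; repeat case: h => [<-|h] //=;
  rewrite ?ltnS ?leq_maxl ?leq_maxr //.
- by rewrite (leq_trans (leq_maxl _ _) (leq_maxl _ _)).
- by rewrite (leq_trans (leq_maxr _ _) (leq_maxl _ _)).
Qed.

(* Atomic occurrences are copied unchanged to all later levels, hence [~~ atomic x]. *)
Lemma height_level g k x : List.In x (level g k) -> ~~ atomic x -> (height x + k <= height g)%N.
Proof.
elim: k x => [|k IH] x; first by case=> [<-|//]; rewrite addn0.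
rewrite level_succ => /In_expand [y hy hx] ax.
have ay : ~~ atomic y.
  apply: contra ax => ay; suff e : children y = [:: y] by move: hx; rewrite e => -[<-|].
  by case: y ay {hy hx}.
by have := IH y hy ay; have := height_child ay hx; lia.
Qed.

Lemma occ_next g k j b : occ g k j b -> ~~ atomic b -> (k.+1 < height g)%N.
Proof.
case=> hk [hj hb] ab.
have hb1 : (1 < height b)%N.
  have hp c : (0 < height c)%N by case: c.
  by case: b ab {hb} => //= *; rewrite ltnS ?leq_max ?hp.
have hin : List.In b (level g k).
  rewrite -hb; elim: (level g k) j hj {hb} => [|y l IH] [|j] //= hj; [by left | right; exact: IH].
by have := height_level hin ab; lia.
Qed.

Lemma occ_child g k l1 b l2 m1 c m2 :
  level g k = l1 ++ b :: l2 -> children b = m1 ++ c :: m2 -> (k.+1 < height g)%N ->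
  occ g k.+1 (size (expand l1 ++ m1)) c.
Proof.
move=> hl hb hk.
have hl' : level g k.+1 = (expand l1 ++ m1) ++ c :: (m2 ++ expand l2).
  by rewrite (level_next hl) hb -!catA.
by split=> //; rewrite hl' nth_cat ltnn subnn !size_cat /=; split=> //; lia.
Qed.

Lemma ctx_Red2 Hol g k l1 b l2 : level g k = l1 ++ b :: l2 ->
  ctx Hol g k (size l1) =2 Red2 (sumAt l1) (sumAt l2) (Hol g k).
Proof.
move=> hl u x; rewrite /ctx /Red /Red2 /RedR /RedL hl map_cat.
have -> : (\sum_(i < size l1) nth 0%N (map At l1 ++ map At (b :: l2)) i)%R = sumAt l1.
  rewrite /sumAt sumnE (big_nth 0%N) size_map big_mkord; apply: eq_bigr => i _.
  by rewrite nth_cat size_map ltn_ord.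
have -> : drop (size l1).+1 (map At l1 ++ map At (b :: l2)) = map At l2.
  by rewrite -cat_rcons drop_size_cat // size_rcons size_map.
by rewrite -sumnE exchange_big.
Qed.

Lemma ctx_step T Hol g k l1 b l2 : unitary2 T -> holistic T Hol ->
  level g k = l1 ++ b :: l2 -> (k.+1 < height g)%N ->
  opeq (At b) (ctx Hol g k (size l1))
       (Dgate (At b) (gateT_of T b) (Red2 (sumAt l1) (sumAt l2) (Hol g k.+1))).
Proof.
move=> hT [_ [hlev _]] hl hk; have eN := At_level hl.
pose gl b := (gateT_of T b, At b).
have snd_gl l : map snd (map gl l) = map At l by elim: l => //= ? ? ->.
have iso_gl l : isometric (sumAt l) (tens (map gl l)).
  rewrite /sumAt -snd_gl; apply: isometric_tens => G n /List.in_map_iff [c [[<- <-] _]].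
  exact: isometric_gateT_of.
have hlg : opeq (sumAt l1 + (At b + sumAt l2)) (levelgate T g k)
   (tensor2 (sumAt l1) (tens (map gl l1)) (tensor2 (At b) (gateT_of T b) (tens (map gl l2)))).
  have := tens_cat (L1 := map gl l1) (L2 := map gl (b :: l2)); rewrite !snd_gl.
  by rewrite /levelgate hl map_cat; apply.
move=> u x su sx; rewrite (ctx_Red2 _ hl) -(Red2_Dgate (gateT_of T b) (Hol g k.+1) (iso_gl l1) (iso_gl l2) su sx).
by apply: Red2_mor u x su sx; rewrite -eN hlev // eN hlg.
Qed.

Definition marginal T N H i := \sum_(X <- allbits N) (nth false X i)%:R * diagT T N H X.

Lemma marginal_ge0 T N H i : density N H -> 0 <= marginal T N H i.
Proof.
by move=> hd; apply: sumr_ge0 => X _; apply: mulr_ge0; [apply: ler0n | apply: diagT_ge0].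
Qed.

Lemma marginal_le1 T N H i : unitary2 T -> density N H -> marginal T N H i <= 1.
Proof.
move=> hT hd; rewrite -hd.2 -(big_diagT _ _ hT); apply: ler_sum => X _.
by have := diagT_ge0 T X hd; case: (nth false X i); rewrite /= ?mul1r ?mul0r.
Qed.

Lemma marginal_Red2 T p n q H i : unitary2 T -> (i < n)%N ->
  \sum_(Y <- allbits n) (nth false Y i)%:R * diagT T n (Red2 p q H) Y =
  marginal T (p + (n + q)) H (p + i).
Proof.
move=> hT hi; rewrite /marginal big_allbits_cat.
transitivity (\sum_(a <- allbits p) \sum_(Y <- allbits n) \sum_(c <- allbits q)
    (nth false Y i)%:R * diagT T (p + (n + q)) H (a ++ (Y ++ c))); last first.
  apply: eq_big_seq => a /size_allbits sa; rewrite big_allbits_cat.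
  apply: eq_big_seq => Y /size_allbits sY; apply: eq_bigr => c _.
  by rewrite nth_cat sa ltnNge leq_addr /= addKn nth_cat sY hi.
rewrite exchange_big3 exchange_big /=; apply: eq_big_seq => Y /size_allbits sY.
rewrite diagT_Red2 // mulr_sumr [RHS]exchange_big /=.
by apply: eq_bigr => a _; rewrite mulr_sumr.
Qed.

Lemma probT_ctx T Hol g k l1 b l2 : unitary2 T -> level g k = l1 ++ b :: l2 ->
  probT T (At b) (ctx Hol g k (size l1)) = marginal T (At g) (Hol g k) (sumAt l1 + (At b).-1).
Proof.
move=> hT hl; rewrite (@probT_opeq T (At b) _ (Red2 (sumAt l1) (sumAt l2) (Hol g k)));
  last by move=> u x _ _; exact: (ctx_Red2 Hol hl u x).
rewrite probT_diagT (At_level hl) -marginal_Red2 ?prednK ?At_gt0 //.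
by apply: eq_big_seq => Y /size_allbits sY; rewrite -nth_last sY.
Qed.

Lemma probT_ctx_ge0 T Hol g k j b : unitary2 T -> holistic T Hol -> occ g k j b ->
  0 <= probT T (At b) (ctx Hol g k j).
Proof.
move=> hT [hd _] ho; have [l1 [l2 [hl ->]]] := occ_level ho.
by rewrite (probT_ctx _ hT hl); apply/marginal_ge0/hd; case: ho.
Qed.

Lemma probT_ctx_le1 T Hol g k j b : unitary2 T -> holistic T Hol -> occ g k j b ->
  probT T (At b) (ctx Hol g k j) <= 1.
Proof.
move=> hT [hd _] ho; have [l1 [l2 [hl ->]]] := occ_level ho.
by rewrite (probT_ctx _ hT hl); apply/marginal_le1/hd => //; case: ho.
Qed.

Lemma probT_normal T Hol g b k1 j1 k2 j2 : holistic T Hol ->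
  occ g k1 j1 b -> occ g k2 j2 b ->
  probT T (At b) (ctx Hol g k1 j1) = probT T (At b) (ctx Hol g k2 j2).
Proof. by case=> _ [_ [hnorm _]] o1 o2; apply/probT_opeq/(hnorm _ _ _ _ _ _ o1 o2). Qed.

Section Occurrence.

Variables (T : op) (Hol : Defs.form -> nat -> op) (g : Defs.form) (k : nat).
Variables (l1 : seq Defs.form) (b : Defs.form) (l2 : seq Defs.form).
Hypothesis hT : unitary2 T.
Hypothesis hl : level g k = l1 ++ b :: l2.

Let rho := Red2 (sumAt l1) (sumAt l2) (Hol g k.+1).

Lemma probT_ctx_child m1 c m2 : children b = m1 ++ c :: m2 ->
  probT T (At c) (ctx Hol g k.+1 (size (expand l1 ++ m1))) =
  \sum_(Y <- allbits (At b)) (nth false Y (sumAt m1 + (At c).-1))%:R * diagT T (At b) rho Y.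
Proof.
move=> hb; have hl' : level g k.+1 = (expand l1 ++ m1) ++ c :: (m2 ++ expand l2).
  by rewrite (level_next hl) hb -!catA.
have hAb : At b = (sumAt m1 + (At c + sumAt m2))%N by rewrite -sumAt_children hb sumAt_cat.
rewrite (probT_ctx _ hT hl') marginal_Red2 //; last by rewrite hAb; have := At_gt0 c; lia.
by rewrite -(At_level hl) sumAt_cat sumAt_expand addnA.
Qed.

Lemma probT_ctx_flipgate G h : holistic T Hol -> (k.+1 < height g)%N ->
  gateT_of T b = conjT T (At b) G -> (forall s, involutive (h s)) ->
  opeq (At b) G (flipgate h) ->
  probT T (At b) (ctx Hol g k (size l1)) =
  \sum_(Y <- allbits (At b)) (h (front Y) (last false Y))%:R * diagT T (At b) rho Y.
Proof.
move=> hH hk hGb hh hG; rewrite (probT_opeq _ (ctx_step hT hH hl hk)) hGb.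
exact: probT_Dgate_flipgate (At_gt0 b) hG.
Qed.

Lemma diagT_children_ge0 Y : holistic T Hol -> (k.+1 < height g)%N -> size Y = At b ->
  0 <= diagT T (At b) rho Y.
Proof.
case=> hd _ hk sY; apply: diagT_Red2_ge0 => //.
by rewrite -(At_level hl); apply: hd.
Qed.

Lemma big_diagT_children : holistic T Hol -> (k.+1 < height g)%N ->
  \sum_(Y <- allbits (At b)) diagT T (At b) rho Y = 1.
Proof.
case=> hd _ hk; rewrite big_diagT // trace_Red2 -(At_level hl).
exact: (hd g k.+1 hk).2.
Qed.

End Occurrence.

Lemma probT_ctx_Neg T Hol g k j c : unitary2 T -> holistic T Hol -> occ g k j (Neg c) ->
  exists2 j', occ g k.+1 j' c &
    probT T (At c) (ctx Hol g k j) = 1 - probT T (At c) (ctx Hol g k.+1 j').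
Proof.
move=> hT hH ho; have hk := occ_next ho isT; have [l1 [l2 [hl ->]]] := occ_level ho.
have hb : children (Neg c) = [::] ++ c :: [::] by [].
exists (size (expand l1 ++ [::])); first exact: occ_child hl hb hk.
rewrite (probT_ctx_child Hol hT hl hb).
rewrite (probT_ctx_flipgate hT hl hH hk (erefl _) (fun _ => negbK) (NOTg_flipgate (At_gt0 c))).
rewrite -[X in X - _](big_diagT_children hT hl hH hk) -sumrB.
apply: eq_big_seq => Y /size_allbits /= sY; rewrite /sumAt /= add0n -sY nth_last.
by case: (last false Y); rewrite /= ?mul1r ?mul0r ?subrr ?subr0.
Qed.

Lemma big_xor_and_le (s : seq (seq bool)) (D : seq bool -> C) (a b z : seq bool -> bool) :
  (forall Y, Y \in s -> 0 <= D Y) ->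
  \sum_(Y <- s) ((a Y && b Y) (+) z Y)%:R * D Y <=
    \sum_(Y <- s) (a Y)%:R * D Y + \sum_(Y <- s) (z Y)%:R * D Y /\
  \sum_(Y <- s) ((a Y && b Y) (+) z Y)%:R * D Y <=
    \sum_(Y <- s) (b Y)%:R * D Y + \sum_(Y <- s) (z Y)%:R * D Y.
Proof.
move=> hD; split; rewrite -big_split /= big_seq [X in _ <= X]big_seq;
  apply: ler_sum => Y hY; rewrite -mulrDl ler_wpM2r ?hD // -natrD ler_nat;
  by case: (a Y); case: (b Y); case: (z Y).
Qed.

(** Since the [f]-child has probability 0, the Toffoli gate computing [c /\ d] can only lower the probabilities of [c] and [d]. *)
Lemma probT_ctx_And T Hol g k j c d : unitary2 T -> holistic T Hol -> occ g k j (And c d) ->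
  exists jc jd, [/\ occ g k.+1 jc c, occ g k.+1 jd d,
    probT T (At (And c d)) (ctx Hol g k j) <= probT T (At c) (ctx Hol g k.+1 jc) &
    probT T (At (And c d)) (ctx Hol g k j) <= probT T (At d) (ctx Hol g k.+1 jd)].
Proof.
move=> hT hH ho; have hk := occ_next ho isT; have [l1 [l2 [hl ->]]] := occ_level ho.
have hc : children (And c d) = [::] ++ c :: [:: d; Ff] by [].
have hd : children (And c d) = [:: c] ++ d :: [:: Ff] by [].
have hf : children (And c d) = [:: c; d] ++ Ff :: [::] by [].
exists (size (expand l1 ++ [::])), (size (expand l1 ++ [:: c])).
pose D := diagT T (At (And c d)) (Red2 (sumAt l1) (sumAt l2) (Hol g k.+1)).
have posc := At_gt0 c; have posd := At_gt0 d.
have pc := probT_ctx_child Hol hT hl hc; rewrite /sumAt /= add0n -/D in pc.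
have pd := probT_ctx_child Hol hT hl hd; rewrite /sumAt /= addn0 -/D in pd.
have pf : \sum_(Y <- allbits (At (And c d))) (nth false Y (At c + At d))%:R * D Y = 0.
  have := probT_ctx_child Hol hT hl hf; rewrite /sumAt /= !addn0 -/D => <-.
  have [_ [_ [_ [hff _]]]] := hH.
  by rewrite (probT_opeq _ (hff _ _ _ (occ_child hl hf hk))) probT_projT.
have pa : probT T (At (And c d)) (ctx Hol g k (size l1)) =
  \sum_(Y <- allbits (At (And c d)))
    ((nth false Y (At c).-1 && nth false Y (At c + (At d).-1)) (+) nth false Y (At c + At d))%:R
      * D Y.
  pose h s := addb (nth false s (At c).-1 && nth false s (At c + At d).-1).
  have hh s : involutive (h s) by move=> e; rewrite /h addbA addbb.
  have hG : opeq (At (And c d)) (TOFg (At c) (At d)) (flipgate h).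
    by apply: TOFg_flipgate => /=; lia.
  rewrite (probT_ctx_flipgate hT hl hH hk (erefl _) hh hG).
  apply: eq_big_seq => Y /size_allbits /= sY; rewrite /h !nth_front ?sY; try lia.
  have -> : (At c + (At d).-1)%N = (At c + At d).-1 by lia.
  by rewrite -nth_last (_ : (size Y).-1 = At c + At d)%N // sY addn1.
have D_ge0 Y : Y \in allbits (At (And c d)) -> 0 <= D Y.
  by move=> /size_allbits sY; apply: diagT_children_ge0.
have [le_c le_d] := big_xor_and_le (fun Y => nth false Y (At c).-1)
  (fun Y => nth false Y (At c + (At d).-1)) (fun Y => nth false Y (At c + At d)) D_ge0.
split; try exact: occ_child hl _ hk.
- by rewrite pa pc; apply: le_trans le_c _; rewrite pf addr0.
- by rewrite pa pd; apply: le_trans le_d _; rewrite pf addr0.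
Qed.

Lemma consequence_Andl a b : consequence (And a b) a.
Proof.
move=> T hT g Hol hH k1 j1 k2 j2 o1 o2.
have [jc [jd [oc _ le_c _]]] := probT_ctx_And hT hH o1.
by rewrite (probT_normal hH o2 oc).
Qed.

Lemma consequence_Andr a b : consequence (And a b) b.
Proof.
move=> T hT g Hol hH k1 j1 k2 j2 o1 o2.
have [jc [jd [_ od _ le_d]]] := probT_ctx_And hT hH o1.
by rewrite (probT_normal hH o2 od).
Qed.

Lemma consequence_Andl_trans a b d : consequence a b -> consequence (And a d) b.
Proof.
move=> hab T hT g Hol hH k1 j1 k2 j2 o1 o2.
have [jc [jd [oc _ le_c _]]] := probT_ctx_And hT hH o1.
exact: le_trans le_c (hab T hT g Hol hH _ _ _ _ oc o2).
Qed.

Lemma probT_ctx_NegNeg T Hol g k j a : unitary2 T -> holistic T Hol ->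
  occ g k j (Neg (Neg a)) ->
  exists2 j', occ g k.+2 j' a & probT T (At a) (ctx Hol g k j) = probT T (At a) (ctx Hol g k.+2 j').
Proof.
move=> hT hH o; have [j1 o1 e1] := probT_ctx_Neg hT hH o.
have [j2 o2 e2] := probT_ctx_Neg hT hH o1.
by exists j2 => //; rewrite /= e1 e2 subKr.
Qed.

Lemma equiv_NegNeg a : Defs.equiv (Neg (Neg a)) a.
Proof.
split=> T hT g Hol hH k1 j1 k2 j2 o1 o2.
- have [j o e] := probT_ctx_NegNeg hT hH o1.
  by rewrite /= e (probT_normal hH o o2).
- have [j o e] := probT_ctx_NegNeg hT hH o2.
  by rewrite /= e (probT_normal hH o o1).
Qed.

Lemma consequence_contra a b : consequence a b -> consequence (Neg b) (Neg a).
Proof.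
move=> hab T hT g Hol hH k1 j1 k2 j2 o1 o2.
have [jb ob eb] := probT_ctx_Neg hT hH o1.
have [ja oa ea] := probT_ctx_Neg hT hH o2.
by rewrite /= eb ea lerB // (hab T hT g Hol hH _ _ _ _ oa ob).
Qed.

Lemma consequence_Ff b : consequence Ff b.
Proof.
move=> T hT g Hol hH k1 j1 k2 j2 o1 o2; have [_ [_ [_ [hf _]]]] := hH.
by rewrite (probT_opeq _ (hf _ _ _ o1)) probT_projT // (probT_ctx_ge0 hT hH o2).
Qed.

Lemma consequence_Tt b : consequence b Tt.
Proof.
move=> T hT g Hol hH k1 j1 k2 j2 o1 o2; have [_ [_ [_ [_ ht]]]] := hH.
by rewrite (probT_opeq _ (ht _ _ _ o2)) probT_projT // (probT_ctx_le1 hT hH o1).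
Qed.

Theorem theorem5p1 : forall a b d : Defs.form,
  (consequence (And a b) a /\ consequence (And a b) b) /\
  (consequence a b -> consequence (And a d) b) /\
  Defs.equiv (Neg (Neg a)) a /\
  (consequence a b -> consequence (Neg b) (Neg a)) /\
  (consequence Ff b /\ consequence b Tt).
Proof.
move=> a b d; split; first by split; [apply: consequence_Andl | apply: consequence_Andr].
split; first exact: consequence_Andl_trans.
split; first exact: equiv_NegNeg.
split; first exact: consequence_contra.
by split; [apply: consequence_Ff | apply: consequence_Tt].
Qed.
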